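(* Let $g\ge0$, $n\ge1$. Let $[Ch_1]$ and $[Ch_2]$ be two chambers up to symmetry, and let $\mathcal{A}\in Ch_1\in[Ch_1]$, $\mathcal{B}\in Ch_2\in[Ch_2]$ be weight data. If $[Ch_1]\le[Ch_2]$, there is an inclusion as a full subcategory $\mathcal{G}_{g,\mathcal{A}}\hookrightarrow\mathcal{G}_{g,\mathcal{B}}$; it is an isomorphism of categories if $[Ch_1]=[Ch_2]$.
   Context: A weight datum is $\mathcal{A}=(a_1,\dots,a_n)$ with $a_i\in\mathbb{Q}\cap(0,1]$ and $2g-2+\sum_i a_i>0$; $\mathcal{D}_{g,n}\subset\mathbb{R}^n$ is the set of weight data. For $S\subseteq\{1,\dots,n\}$ with $2\le|S|\le n$ if $g\ge1$ (resp. $2\le|S|\le n-2$ if $g=0$), the wall $w_S$ is the locus $\sum_{i\in S}a_i=1$. The chambers are the connected components of the complement in $\mathcal{D}_{g,n}$ of all walls; each is determined by the direction ($<1$ or $>1$) of $\sum_{i\in S}a_i$ for each such $S$. The set $\mathbf{K}$ of chambers is partially ordered by $Ch_1\le Ch_2$ iff for every such $S$, $\sum_{i\in S}a_i>1$ on $Ch_1$ implies $\sum_{i\in S}b_i>1$ on $Ch_2$. $S_n$ acts on $\mathcal{D}_{g,n}$ by permuting coordinates and hence on $\mathbf{K}$; a chamber up to symmetry $[Ch]$ is the $S_n$-orbit of $Ch$, and $[Ch_1]\le[Ch_2]$ iff there are $Ch_1'\in[Ch_1]$, $Ch_2'\in[Ch_2]$ with $Ch_1'\le Ch_2'$. A $(g,\mathcal{A})$-stable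 graph is a finite connected graph $G$ (loops and multiple edges allowed) with vertex weight $w:V(G)\to\mathbb{Z}_{\ge0}$ and $n$ legs labelled $1,\dots,n$ attached via $m:\{1,\dots,n\}\to V(G)$, with $b_1(G)+\sum_v w(v)=g$ and $2w(v)-2+|v|_E+|v|_{\mathcal{A}}>0$ for every vertex $v$, where $|v|_E$ is the number of edge half-edges at $v$ (loops counted twice) and $|v|_{\mathcal{A}}=\sum_{m(i)=v}a_i$. $\mathcal{G}_{g,\mathcal{A}}$ is the category whose objects are $(g,\mathcal{A})$-stable graphs and whose morphisms are compositions of isomorphisms of weighted marked graphs and weighted edge contractions. *)

From HB Require Import structures.
From mathcomp Require Import all_boot all_order all_algebra all_fingroup.
Set Implicit Arguments. Unset Strict Implicit. Unset Printing Implicit Defensive.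
Import Order.TTheory GRing.Theory Num.Theory.
Local Open Scope int_scope.
Local Open Scope nat_scope.

Section Weights.
Variable n : nat.

Definition weight_datum (g : nat) (A : 'I_n -> rat) : Prop :=
  (forall i, (0 < A i)%R /\ (A i <= 1)%R) /\
  (0 < 2 * (g%:R) - 2 + \sum_(i < n) A i)%R.

(* S indexes a wall w_S *)
Definition admissible (g : nat) (S : {set 'I_n}) : bool :=
  (2 <= #|S|) && (#|S| <= (if g == 0 then n - 2 else n)).

Definition wsum (A : 'I_n -> rat) (S : {set 'I_n}) : rat := \sum_(i in S) A i.

Definition in_chamber (g : nat) (A : 'I_n -> rat) : Prop :=
  weight_datum g A /\ forall S, admissible g S -> wsum A S != 1%R.

Definition chamber_le (g : nat) (A B : 'I_n -> rat) : Prop :=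
  forall S, admissible g S -> (1 < wsum A S)%R -> (1 < wsum B S)%R.

Definition same_chamber (g : nat) (A B : 'I_n -> rat) : Prop :=
  forall S, admissible g S -> (1 < wsum A S)%R = (1 < wsum B S)%R.

Definition permw (s : 'S_n) (A : 'I_n -> rat) : 'I_n -> rat :=
  fun i => A ((s^-1)%g i).

Definition sym_chamber_le (g : nat) (A B : 'I_n -> rat) : Prop :=
  exists s1 s2 : 'S_n, chamber_le g (permw s1 A) (permw s2 B).

Definition sym_chamber_eq (g : nat) (A B : 'I_n -> rat) : Prop :=
  exists s : 'S_n, same_chamber g (permw s A) B.

End Weights.

(* Vertices are 'I_nv, half-edges are 'I_nh; each half-edge h is attached
   to the vertex vert h, and the fixed-point-free involution inv pairs
   half-edges into edges (a loop has both half-edges at the same vertex). *)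
Record sgraph (n : nat) := SGraph {
  nv : nat;
  nh : nat;
  vert : {ffun 'I_nh -> 'I_nv};
  inv : {ffun 'I_nh -> 'I_nh};
  leg : {ffun 'I_n -> 'I_nv};
  wt : {ffun 'I_nv -> nat} }.

Section Graphs.
Variable n : nat.
Implicit Types G : sgraph n.

Definition adj G : rel 'I_(nv G) :=
  fun u v => [exists h, (vert G h == u) && (vert G (inv G h) == v)].

Arguments adj : clear implicits.

Definition well_formed G : Prop :=
  (forall h, inv G (inv G h) = h /\ inv G h != h) /\
  (forall u v, connect (adj G) u v).

(* first Betti number of a connected graph: |E| - |V| + 1 *)
Definition betti1 G : int := (((nh G)./2)%:Z - (nv G)%:Z + 1)%R.

(* |v|_E : number of half-edges at v (loops counted twice) *)
Definition degE G (v : 'I_(nv G)) : nat := #|[set h | vert G h == v]|.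

Definition degA G (A : 'I_n -> rat) (v : 'I_(nv G)) : rat :=
  \sum_(i < n | leg G i == v) A i.

Definition stable_graph (g : nat) (A : 'I_n -> rat) G : Prop :=
  well_formed G /\
  (betti1 G + (\sum_(v < nv G) wt G v)%:Z)%R = g%:Z /\
  forall v, (0 < 2 * (wt G v)%:R - 2 + (degE v)%:R + degA A v)%R.

Record gmap (G G' : sgraph n) := GMap {
  mV : {ffun 'I_(nv G) -> 'I_(nv G')};
  mH : {ffun 'I_(nh G') -> 'I_(nh G)} }.

Definition gid G : gmap G G := GMap [ffun v => v] [ffun h => h].

Arguments gid : clear implicits.

Definition gcomp G G' G'' (f : gmap G G') (f' : gmap G' G'') : gmap G G'' :=
  GMap [ffun v => mV f' (mV f v)] [ffun h => mH f (mH f' h)].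

Definition compat G G' (f : gmap G G') : Prop :=
  (forall h', inv G (mH f h') = mH f (inv G' h')) /\
  (forall h', mV f (vert G (mH f h')) = vert G' h') /\
  (forall i, mV f (leg G i) = leg G' i).

Definition is_iso G G' (f : gmap G G') : Prop :=
  compat f /\ bijective (mV f) /\ bijective (mH f) /\
  (forall v, wt G' (mV f v) = wt G v).

Definition is_contraction G G' (f : gmap G G') (h : 'I_(nh G)) : Prop :=
  let a := vert G h in let b := vert G (inv G h) in
  compat f /\ injective (mH f) /\
  (forall x, (x \in codom (mH f)) = (x != h) && (x != inv G h)) /\
  (forall v', exists v, mV f v = v') /\
  (forall x y, (mV f x == mV f y) =
               [|| x == y, (x == a) && (y == b) | (x == b) && (y == a)]) /\
  (forall v, v != a -> v != b -> wt G' (mV f v) = wt G v) /\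
  wt G' (mV f a) = wt G a + (if a == b then 1 else wt G b).

(* morphisms of the category whose objects satisfy P: compositions of
   isomorphisms and weighted edge contractions, passing through objects *)
Inductive gen (P : sgraph n -> Prop) : forall G G', gmap G G' -> Prop :=
| gen_id G : gen P (gid G)
| gen_iso G G' (f : gmap G G') : is_iso f -> gen P f
| gen_contr G G' (f : gmap G G') h : is_contraction f h -> gen P f
| gen_comp G G' G'' (f : gmap G G') (f' : gmap G' G'') :
    P G' -> gen P f -> gen P f' -> gen P (gcomp f f').

(* the category with objects {G | P G}; for P = stable_graph g A this is G_{g,A} *)
Definition Obj (P : sgraph n -> Prop) := {G : sgraph n | P G}.

Definition Hom (P : sgraph n -> Prop) (X Y : Obj P) :=
  {f : gmap (sval X) (sval Y) | gen P f}.

Definition idH (P : sgraph n -> Prop) (X : Obj P) : Hom X X :=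
  exist _ (gid (sval X)) (gen_id P (sval X)).

Definition compH (P : sgraph n -> Prop) (X Y Z : Obj P)
  (f : Hom X Y) (f' : Hom Y Z) : Hom X Z :=
  exist _ (gcomp (sval f) (sval f'))
    (gen_comp (proj2_sig Y) (proj2_sig f) (proj2_sig f')).

Record functor (P Q : sgraph n -> Prop) := Functor {
  Fo : Obj P -> Obj Q;
  Fm : forall X Y : Obj P, Hom X Y -> Hom (Fo X) (Fo Y);
  Fm_id : forall X, Fm (idH X) = idH (Fo X);
  Fm_comp : forall X Y Z (f : Hom X Y) (f' : Hom Y Z),
      Fm (compH f f') = compH (Fm f) (Fm f') }.

Definition fully_faithful P Q (F : functor P Q) : Prop :=
  forall X Y, bijective (@Fm P Q F X Y).

Definition full_inclusion P Q (F : functor P Q) : Prop :=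
  injective (Fo F) /\ fully_faithful F.

Definition cat_iso P Q (F : functor P Q) : Prop :=
  bijective (Fo F) /\ fully_faithful F.

End Graphs.

Set Warnings "-notation-overridden,-ambiguous-paths".
From Pilot Require Import Defs.
From HB Require Import structures.
From mathcomp Require Import all_boot all_order all_algebra all_fingroup.
From mathcomp Require Import zify lra.
From Stdlib Require Import ProofIrrelevance FunctionalExtensionality Classical.
Set Implicit Arguments. Unset Strict Implicit. Unset Printing Implicit Defensive.
Import Order.TTheory GRing.Theory Num.Theory.

(* Stability constrains the weights only at vertices with 2 w(v) + |v|_E <= 2,
   where it asks |v|_A > 0, |v|_A > 1, or, for the one-vertex graph of genus 0,
   |v|_A > 2.  The first only asks that v carry a leg, and the last holds for
   every weight datum of genus 0.  In the middle case the set S of legs at v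
   either indexes a wall, and A lies on its side sum_S a_i > 1, or (in genus 0)
   misses at most one leg, and then sum_S b_i > 1 for every weight datum B.
   Thus Ch(A) <= Ch(B) makes every (g,A)-stable graph (g,B)-stable, and
   relabelling the legs accounts for the symmetric group.  Since isomorphisms
   and weighted contractions preserve stability, a composite of such maps in
   G_{g,B} starting at a (g,A)-stable graph only passes through (g,A)-stable
   graphs, so the inclusion is full; when the chambers agree up to symmetry,
   relabelling back gives the inverse functor. *)

Lemma sval_inj (T : Type) (P : T -> Prop) (x y : sig P) : sval x = sval y -> x = y.
Proof.
by case: x y => [x px] [y py] /= exy; subst y; rewrite (proof_irrelevance _ px py).
Qed.

Section Relabel.
Variable n : nat.
Implicit Types (G X Y : sgraph n) (s : 'S_n).

Definition relabel s G : sgraph n :=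
  SGraph (vert G) (Defs.inv G) [ffun i => leg G (s i)] (wt G).

Lemma relabelK s : cancel (relabel s) (relabel s^-1).
Proof.
case=> nv nh v i l w; rewrite /relabel /=; congr SGraph.
by apply/ffunP => j; rewrite !ffunE permKV.
Qed.

Lemma relabelKV s : cancel (relabel s^-1) (relabel s).
Proof. by move=> G; have := relabelK s^-1 G; rewrite invgK. Qed.

Lemma relabel_inj s : injective (relabel s).
Proof. exact: can_inj (relabelK s). Qed.

Definition relabel_map s X Y (f : gmap X Y) : gmap (relabel s X) (relabel s Y) :=
  @GMap n (relabel s X) (relabel s Y) (mV f) (mH f).

(* Taking equations [relabel s Xi = Gi] instead of graphs [relabel s Xi] lets
   [gen_unrelabel_map] proceed by induction on [gen], whose endpoints are
   arbitrary graphs. *)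
Definition unrelabel_map s X1 X2 G1 G2 (e1 : relabel s X1 = G1)
    (e2 : relabel s X2 = G2) : gmap G1 G2 -> gmap X1 X2 :=
  match e1, e2 with erefl, erefl => fun f => @GMap n X1 X2 (mV f) (mH f) end.

Lemma unrelabel_map_id s X G (e1 e2 : relabel s X = G) :
  unrelabel_map e1 e2 (gid G) = gid X.
Proof. by rewrite (proof_irrelevance _ e2 e1); case: G / e1 {e2}. Qed.

Lemma unrelabel_map_comp s X1 X' X2 G1 G' G2 (e1 : relabel s X1 = G1)
    (e' : relabel s X' = G') (e2 : relabel s X2 = G2)
    (f : gmap G1 G') (f' : gmap G' G2) :
  unrelabel_map e1 e2 (gcomp f f') =
  gcomp (unrelabel_map e1 e' f) (unrelabel_map e' e2 f').
Proof. by case: G1 / e1 f; case: G' / e' f'; case: G2 / e2. Qed.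

Lemma compat_relabel_map s X Y (f : gmap X Y) : compat f -> compat (relabel_map s f).
Proof. by case=> fH [fV fL]; split=> //; split=> // i; rewrite !ffunE. Qed.

Lemma compat_unrelabel_map s X Y (f : gmap (relabel s X) (relabel s Y)) :
  compat f -> compat (unrelabel_map erefl erefl f).
Proof.
case=> fH [fV fL]; split=> //; split=> // i.
by have := fL (s^-1 i)%g; rewrite !ffunE permKV.
Qed.

Lemma iso_relabel_map s X Y (f : gmap X Y) : is_iso f -> is_iso (relabel_map s f).
Proof. by case=> /(compat_relabel_map s). Qed.

Lemma iso_unrelabel_map s X Y (f : gmap (relabel s X) (relabel s Y)) :
  is_iso f -> is_iso (unrelabel_map erefl erefl f).
Proof. by case=> /compat_unrelabel_map. Qed.

Lemma contraction_relabel_map s X Y (f : gmap X Y) h :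
  is_contraction f h -> is_contraction (relabel_map s f) h.
Proof. by case=> /(compat_relabel_map s). Qed.

Lemma contraction_unrelabel_map s X Y (f : gmap (relabel s X) (relabel s Y)) h :
  is_contraction f h -> is_contraction (unrelabel_map erefl erefl f) h.
Proof. by case=> /compat_unrelabel_map. Qed.

Lemma gen_relabel_map s (P Q : sgraph n -> Prop) :
  (forall G, P G -> Q (relabel s G)) ->
  forall X Y (f : gmap X Y), gen P f -> gen Q (relabel_map s f).
Proof.
move=> PQ X Y f; elim=> {X Y f} [G | G G' f /(iso_relabel_map s) |
  G G' f h /(contraction_relabel_map s) | G G' G'' f f' /PQ PG' _ gf _ gf'].
- exact: gen_id Q (relabel s G).
- exact: gen_iso.
- exact: gen_contr.
- exact: gen_comp PG' gf gf'.
Qed.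

Lemma gen_unrelabel_map s (Q : sgraph n -> Prop) G1 G2 (f : gmap G1 G2) :
  gen Q f -> forall X1 X2 (e1 : relabel s X1 = G1) (e2 : relabel s X2 = G2),
  gen (fun X => Q (relabel s X)) (unrelabel_map e1 e2 f).
Proof.
elim=> {G1 G2 f} [G | G G' f iso_f | G G' f h contr_f |
  G G' G'' f f' QG' _ IHf _ IHf'] X1 X2 e1 e2.
- have eX : X1 = X2 by apply: (@relabel_inj s); rewrite e1 e2.
  by subst X2; rewrite unrelabel_map_id; apply: gen_id.
- by subst G G'; apply/gen_iso/iso_unrelabel_map.
- by subst G G'; apply/gen_contr/(contraction_unrelabel_map contr_f).
- have e' := relabelKV s G'.
  rewrite (unrelabel_map_comp e1 e' e2); apply: gen_comp (IHf _ _ _ _) (IHf' _ _ _ _).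
  by rewrite e'.
Qed.

Definition morphism_closed (P : sgraph n -> Prop) : Prop :=
  (forall X Y (f : gmap X Y), is_iso f -> P X -> P Y) /\
  (forall X Y (f : gmap X Y) h, is_contraction f h -> P X -> P Y).

Lemma gen_restrict (P Q : sgraph n -> Prop) : morphism_closed P ->
  forall X Y (f : gmap X Y), gen Q f -> P X -> P Y /\ gen P f.
Proof.
case=> isoP contrP X Y f; elim=> {X Y f} [G | G G' f iso_f | G G' f h contr_f |
  G G' G'' f f' _ _ IHf _ IHf'] PG.
- by split; last apply: gen_id.
- by split; [apply: isoP iso_f PG | apply: gen_iso].
- by split; [apply: contrP contr_f PG | apply: gen_contr contr_f].
- have [PG' gf] := IHf PG; have [PG'' gf'] := IHf' PG'.
  by split; last apply: gen_comp PG' gf gf'.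
Qed.

Section RelabelFunctor.
Variables (s : 'S_n) (P Q : sgraph n -> Prop).
Hypothesis relabel_PQ : forall G, P G -> Q (relabel s G).

Definition relabel_obj (X : Obj P) : Obj Q :=
  exist _ (relabel s (sval X)) (relabel_PQ (proj2_sig X)).

Definition relabel_hom (X Y : Obj P) (f : Defs.Hom X Y) :
    Defs.Hom (relabel_obj X) (relabel_obj Y) :=
  exist _ (relabel_map s (sval f)) (gen_relabel_map relabel_PQ (proj2_sig f)).

Lemma relabel_hom_id (X : Obj P) : relabel_hom (idH X) = idH (relabel_obj X).
Proof. exact: sval_inj. Qed.

Lemma relabel_hom_comp (X Y Z : Obj P) (f : Defs.Hom X Y) (f' : Defs.Hom Y Z) :
  relabel_hom (compH f f') = compH (relabel_hom f) (relabel_hom f').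
Proof. exact: sval_inj. Qed.

Definition relabel_functor : functor P Q :=
  Functor relabel_hom_id relabel_hom_comp.

Lemma relabel_functor_full_inclusion :
  morphism_closed P -> full_inclusion relabel_functor.
Proof.
move=> closedP; split=> [X Y /(congr1 sval) /relabel_inj /sval_inj // | X Y].
pose unrelabel_hom (f : Defs.Hom (relabel_obj X) (relabel_obj Y)) : Defs.Hom X Y :=
  exist _ (unrelabel_map erefl erefl (sval f))
    (proj2 (gen_restrict closedP (gen_unrelabel_map (proj2_sig f) _ _)
              (proj2_sig X))).
by exists unrelabel_hom => -[[fV fH] gf]; apply: sval_inj.
Qed.

Lemma relabel_functor_cat_iso : morphism_closed P ->
  (forall G, Q G -> P (relabel s^-1 G)) -> cat_iso relabel_functor.
Proof.
move=> closedP relabel_QP; split; last by case: relabel_functor_full_inclusion.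
exists (fun Y : Obj Q => exist P _ (relabel_QP _ (proj2_sig Y))) => [X | Y];
  by apply: sval_inj; rewrite /= ?relabelK ?relabelKV.
Qed.

End RelabelFunctor.
End Relabel.

Section Stability.
Variables (n g : nat) (A : 'I_n -> rat).
Implicit Types G : sgraph n.

Definition genus G : int := (betti1 G + (\sum_(v < nv G) wt G v)%:Z)%R.

Section CompatibleMap.
Variables (G G' : sgraph n) (f : gmap G G').
Hypotheses (f_compat : compat f) (mH_inj : injective (mH f)).

Lemma involution_image :
  (forall k, Defs.inv G (Defs.inv G k) = k /\ Defs.inv G k != k) ->
  forall k', Defs.inv G' (Defs.inv G' k') = k' /\ Defs.inv G' k' != k'.
Proof.
case: f_compat => mH_inv _ invG k'; have [invK inv_neq] := invG (mH f k').
split; first by apply: mH_inj; rewrite -!mH_inv.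
by apply: contraNneq inv_neq => eqk'; rewrite mH_inv eqk'.
Qed.

Lemma connected_image :
  (forall v', exists v, mV f v = v') ->
  (forall k, k \notin codom (mH f) -> mV f (vert G k) = mV f (vert G (Defs.inv G k))) ->
  (forall u v, connect (@adj n G) u v) -> forall u' v', connect (@adj n G') u' v'.
Proof.
case: f_compat => mH_inv [mH_vert _] mV_surj collapse connG u' v'.
have [u <-] := mV_surj u'; have [v <-] := mV_surj v'.
have /connectP [p] := connG u v; elim: p u => [|w p IHp] u /=; first by move=> _ ->.
case/andP=> /existsP [k /andP [/eqP <- /eqP <-]] path_p last_p.
apply: connect_trans (IHp _ path_p last_p); have [/codomP [k' ->] | /collapse ->] :=
  boolP (k \in codom (mH f)); last exact: connect0.
by apply: connect1; apply/existsP; exists k'; rewrite mH_inv !mH_vert !eqxx.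
Qed.

Lemma degE_image x :
  degE (mV f x) = #|[set k | (k \in codom (mH f)) && (mV f (vert G k) == mV f x)]|.
Proof.
case: f_compat => _ [mH_vert _]; rewrite /degE -(card_imset _ mH_inj).
apply: eq_card => k; rewrite !inE; apply/imsetP/andP => [[k' vk' ->] | [/codomP [k' ->]]].
  by rewrite codom_f mH_vert; move: vk'; rewrite inE.
by rewrite mH_vert => vk'; exists k'; rewrite ?inE.
Qed.

Lemma degA_image x : degA A (mV f x) = (\sum_(i < n | mV f (leg G i) == mV f x) A i)%R.
Proof. by case: f_compat => _ [_ mV_leg]; apply: eq_bigl => i; rewrite mV_leg. Qed.

End CompatibleMap.

Lemma well_formed_image G G' (f : gmap G G') : compat f -> injective (mH f) ->
  (forall v', exists v, mV f v = v') ->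
  (forall k, k \notin codom (mH f) -> mV f (vert G k) = mV f (vert G (Defs.inv G k))) ->
  well_formed G -> well_formed G'.
Proof.
move=> f_compat mH_inj mV_surj collapse [invG connG].
split; first exact: involution_image f_compat mH_inj invG.
exact: connected_image f_compat mV_surj collapse connG.
Qed.

Lemma iso_stable G G' (f : gmap G G') :
  is_iso f -> stable_graph g A G -> stable_graph g A G'.
Proof.
case=> f_compat [mV_bij [mH_bij wt_f]] [wfG [genusG stableG]].
have mV_inj := bij_inj mV_bij; have mH_inj := bij_inj mH_bij.
have mH_codom k : k \in codom (mH f).
  by have [mH' _ mHK'] := mH_bij; rewrite -[k]mHK' codom_f.
have mV_surj v' : exists v, mV f v = v'.
  by have [mV' _ mVK'] := mV_bij; exists (mV' v'); rewrite mVK'.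
split; first by apply: well_formed_image f_compat mH_inj mV_surj _ wfG => k; rewrite mH_codom.
split.
  have card_nh : nh G' = nh G by have := bij_eq_card mH_bij; rewrite !card_ord.
  have card_nv : nv G' = nv G by have := bij_eq_card mV_bij; rewrite !card_ord.
  have sum_wt : (\sum_(v < nv G') wt G' v = \sum_(v < nv G) wt G v)%N.
    by rewrite (reindex (mV f)) /=; [apply: eq_bigr => v _; rewrite wt_f | apply: onW_bij].
  by rewrite -genusG /betti1 sum_wt card_nh card_nv.
move=> v'; have [v <-] := mV_surj v'; rewrite wt_f degE_image // degA_image //.
rewrite (eq_card (B := [set k | vert G k == v])); last first.
  by move=> k; rewrite !inE mH_codom (inj_eq mV_inj).
rewrite (eq_bigl (fun i => leg G i == v)) => [|i]; first exact: stableG.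
by rewrite (inj_eq mV_inj).
Qed.

Section Contraction.
Variables (G G' : sgraph n) (f : gmap G G') (h : 'I_(nh G)).
Local Notation a := (vert G h).
Local Notation b := (vert G (Defs.inv G h)).
Hypotheses (f_compat : compat f) (mH_inj : injective (mH f))
  (codom_mH : forall k, (k \in codom (mH f)) = (k != h) && (k != Defs.inv G h))
  (mV_surj : forall v', exists v, mV f v = v')
  (mV_eq : forall x y, (mV f x == mV f y) =
                       [|| x == y, (x == a) && (y == b) | (x == b) && (y == a)])
  (wt_unmerged : forall v, v != a -> v != b -> wt G' (mV f v) = wt G v)
  (wt_merged : wt G' (mV f a) = wt G a + (if a == b then 1 else wt G b))
  (inv_h_neq : Defs.inv G h != h).

Lemma mV_eq_merged y : (mV f y == mV f a) = (y == a) || (y == b).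
Proof. by rewrite mV_eq eqxx andbT; case: (y == a). Qed.

Lemma mV_eq_unmerged x y : x != a -> x != b -> (mV f y == mV f x) = (y == x).
Proof. by move=> /negbTE xa /negbTE xb; rewrite mV_eq xa xb !andbF !orbF. Qed.

Lemma contraction_sum (F : 'I_(nv G) -> nat) (F' : 'I_(nv G') -> nat) :
  (forall x, x != a -> x != b -> F' (mV f x) = F x) ->
  (\sum_v' F' v' + \sum_(x in [set a; b]) F x = \sum_x F x + F' (mV f a))%N.
Proof.
move=> FF'; rewrite [in RHS](partition_big (mV f) predT) //=.
rewrite (bigD1 (mV f a)) //= [in RHS](bigD1 (mV f a)) //=.
rewrite -addnA addnC; congr (_ + _)%N; rewrite addnC; congr (_ + _)%N; last first.
  apply: eq_bigr => j; have [x <-] := mV_surj j => /negbTE ne_a.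
  have /norP [xa xb] : ~~ ((x == a) || (x == b)) by rewrite -mV_eq_merged ne_a.
  by rewrite FF' // (big_pred1 x) // => y; apply: mV_eq_unmerged.
by apply: eq_bigl => x; rewrite mV_eq_merged !inE.
Qed.

Lemma contraction_nh : nh G = (nh G').+2.
Proof.
have := cardC (pred2 h (Defs.inv G h)); rewrite card2 eq_sym inv_h_neq card_ord.
move=> <-; rewrite -[nh G']card_ord -(card_codom mH_inj).
by rewrite add2n; congr _.+2; apply: eq_card => k; rewrite !inE codom_mH negb_or.
Qed.

Lemma contraction_genus : genus G' = genus G.
Proof.
have := @contraction_sum (fun _ => 1%N) (fun _ => 1%N) (fun _ _ _ => erefl).
have := contraction_sum wt_unmerged; rewrite wt_merged !sum1_card cards2 !card_ord.
have half_nh : (nh G)./2 = ((nh G')./2).+1 by rewrite contraction_nh.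
rewrite /genus /betti1 half_nh.
have [-> | ne_ab] := eqVneq a b.
  rewrite setUid big_set1 /=; lia.
rewrite big_setU1 ?inE // big_set1 /=; lia.
Qed.

Lemma degE_unmerged x : x != a -> x != b -> degE (mV f x) = degE x.
Proof.
move=> xa xb; rewrite degE_image //; apply: eq_card => k.
rewrite !inE codom_mH (mV_eq_unmerged _ xa xb).
case: (eqVneq (vert G k) x) => [vk | _]; rewrite ?andbF ?andbT //.
by apply/andP; split; apply/eqP => ek; rewrite -vk ek eqxx in xa xb.
Qed.

Lemma degA_unmerged x : x != a -> x != b -> degA A (mV f x) = degA A x.
Proof.
by move=> xa xb; rewrite degA_image //; apply: eq_bigl => i; rewrite mV_eq_unmerged.
Qed.

Lemma degE_merged : (degE (mV f a)).+2 = degE a + (if a == b then 0 else degE b).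
Proof.
set T := [set k | (vert G k == a) || (vert G k == b)].
have -> : degE (mV f a) = #|T :\ h :\ Defs.inv G h|.
  rewrite degE_image //; apply: eq_card => k.
  by rewrite !inE codom_mH mV_eq_merged -andbA andbCA.
have -> : (#|T :\ h :\ Defs.inv G h|).+2 = #|T|.
  by rewrite (cardsD1 h T) (cardsD1 (Defs.inv G h) (T :\ h)) !inE inv_h_neq !eqxx orbT.
have [eq_ab | ne_ab] := eqVneq a b.
  by rewrite addn0 /degE; apply: eq_card => k; rewrite !inE -eq_ab orbb.
rewrite /degE -cardsUI.
have -> : [set k | vert G k == a] :&: [set k | vert G k == b] = set0.
  apply/setP => k; rewrite !inE; apply/andP => -[/eqP vk /eqP vk'].
  by rewrite -vk vk' eqxx in ne_ab.
by rewrite cards0 addn0; apply: eq_card => k; rewrite !inE.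
Qed.

Lemma degA_merged : degA A (mV f a) = (degA A a + if a == b then 0 else degA A b)%R.
Proof.
rewrite degA_image //.
rewrite (eq_bigl (fun i => (leg G i == a) || (leg G i == b))) => [|i]; last first.
  exact: mV_eq_merged.
have [eq_ab | ne_ab] := eqVneq a b.
  by rewrite addr0; apply: eq_bigl => i; rewrite -eq_ab orbb.
rewrite (bigID (fun i => leg G i == a)) /=; congr (_ + _)%R; apply: eq_bigl => i.
  by case: (leg G i == a); rewrite /= ?andbF ?andbT.
by case: (eqVneq (leg G i) a) => [-> | _]; rewrite ?(negbTE ne_ab) ?andbT.
Qed.

Lemma merged_stable :
  (forall v, 0 < 2 * (wt G v)%:R - 2 + (degE v)%:R + degA A v)%R ->
  (0 < 2 * (wt G' (mV f a))%:R - 2 + (degE (mV f a))%:R + degA A (mV f a))%R.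
Proof.
move=> stableG; have := stableG a; have := stableG b.
have := congr1 (fun m => m%:R : rat) degE_merged; rewrite /= degA_merged wt_merged.
case: (a == b); rewrite -addn2 !natrD /=; lra.
Qed.

End Contraction.

Lemma contraction_stable G G' (f : gmap G G') h :
  is_contraction f h -> stable_graph g A G -> stable_graph g A G'.
Proof.
case=> f_compat [mH_inj [codom_mH [mV_surj [mV_eq [wt_unmerged wt_merged]]]]].
case=> [[invG connG] [genusG stableG]]; have [invK_h inv_h_neq] := invG h.
have mV_ab : mV f (vert G (Defs.inv G h)) = mV f (vert G h).
  by apply/eqP; rewrite mV_eq !eqxx andbT !orbT.
split.
  apply: well_formed_image f_compat mH_inj mV_surj _ (conj invG connG) => k.
  by rewrite codom_mH negb_and !negbK => /orP [] /eqP ->; rewrite ?invK_h mV_ab.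
split; first by rewrite -genusG;
  exact: contraction_genus mH_inj codom_mH mV_surj mV_eq wt_unmerged wt_merged inv_h_neq.
move=> v'; have [x <-] := mV_surj v'.
have [x_ab | /norP [xa xb]] := boolP ((x == vert G h) || (x == vert G (Defs.inv G h))).
  have -> : mV f x = mV f (vert G h) by apply/eqP; rewrite mV_eq_merged.
  exact: merged_stable.
by rewrite wt_unmerged // (degE_unmerged (h := h)) // (degA_unmerged (h := h)).
Qed.

Lemma stable_morphism_closed : morphism_closed (stable_graph g A).
Proof.
by split=> X Y f; [apply: iso_stable | move=> h; apply: (@contraction_stable X Y f h)].
Qed.

End Stability.

Section Chambers.
Variables (n g : nat).
Implicit Types (A B C : 'I_n -> rat) (G : sgraph n) (S : {set 'I_n}) (s t : 'S_n).

Lemma wsum_le_card C S : (forall i, C i <= 1)%R -> (wsum C S <= #|S|%:R)%R.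
Proof. by move=> C_le1; rewrite -sumr_const; apply: ler_sum => i _. Qed.

Lemma wsum_setC C S : (wsum C S = \sum_(i < n) C i - wsum C (~: S))%R.
Proof.
have -> : wsum C (~: S) = (\sum_(i | i \notin S) C i)%R.
  by apply: eq_bigl => i; rewrite in_setC.
by rewrite (bigID (mem S)) /= addrK.
Qed.

Lemma chamber_le_wsum_gt1 A B S : weight_datum g A -> weight_datum g B ->
  chamber_le g A B -> (1 < wsum A S)%R -> (1 < wsum B S)%R.
Proof.
move=> [A01 _] [B01 sumB] le_AB gt1_A.
have card_S : 1 < #|S|.
  rewrite ltnNge; apply/negP => card_S; have := wsum_le_card S (fun i => proj2 (A01 i)).
  by rewrite -(ler_nat rat) in card_S; lra.
have [adm | not_adm] := boolP (admissible g S); first exact: le_AB adm gt1_A.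
have [g0 card_Sc] : g = 0 /\ #|~: S| <= 1.
  have := cardsC S; rewrite card_ord; move: not_adm; rewrite /admissible card_S.
  by case: (g) => [|g'] /=; lia.
subst g; rewrite -(ler_nat rat) in card_Sc; rewrite mulr0 in sumB.
have := wsum_le_card (~: S) (fun i => proj2 (B01 i)); rewrite (wsum_setC B S); lra.
Qed.

Lemma isolated_vertex G v : well_formed G -> degE v = 0 ->
  (forall u, u = v) /\ genus G = Posz (wt G v).
Proof.
move=> [_ connG] degE0.
have no_half_edge k : vert G k != v.
  by apply/negP => vk; move/cards0_eq/setP/(_ k): degE0; rewrite !inE vk.
have all_v u : u = v.
  have /connectP [[|w p] /=] := connG v u; first by move=> _ ->.
  by case/andP=> /existsP [k /andP [vk _]]; rewrite (negbTE (no_half_edge k)) in vk.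
have nh0 : nh G = 0.
  rewrite -[nh G]card_ord; apply: eq_card0 => k.
  by have := no_half_edge k; rewrite (all_v (vert G k)) eqxx.
have nv1 : nv G = 1.
  by rewrite -[nv G]card_ord -(card1 v); apply: eq_card => u; rewrite (all_v u) !inE eqxx.
have sum_wt : (\sum_(u < nv G) wt G u)%N = wt G v.
  by rewrite (bigD1 v) //= big1 ?addn0 // => u; rewrite (all_v u) eqxx.
split=> //; rewrite /genus /betti1 sum_wt nh0 [in Posz (nv G)]nv1 /=; lia.
Qed.

Lemma stable_chamber_le A B G : weight_datum g A -> weight_datum g B ->
  chamber_le g A B -> stable_graph g A G -> stable_graph g B G.
Proof.
move=> wA wB le_AB [wfG [genusG stableG]]; split=> //; split=> // v.
have [B01 sumB] := wB.
set S := [set i | leg G i == v].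
have degA_wsum C : degA C v = wsum C S by apply: eq_bigl => i; rewrite inE.
have wsumB_ge0 : (0 <= wsum B S)%R by apply: sumr_ge0 => i _; apply: ltW; case: (B01 i).
have := stableG v; rewrite !degA_wsum.
have -> : (2 * (wt G v)%:R - 2 + (degE v)%:R = (2 * wt G v + degE v)%:R - 2 :> rat)%R.
  by rewrite natrD natrM addrAC.
case k_eq: (2 * wt G v + degE v) => [|[|[|k]]].
- have [all_v genus_v] : (forall u, u = v) /\ genus G = Posz (wt G v).
    by apply: isolated_vertex wfG _; lia.
  have g0 : g = 0 by move: genusG; rewrite -/(genus G) genus_v; lia.
  have -> : wsum B S = (\sum_i B i)%R.
    by apply: eq_bigl => i; rewrite inE (all_v (leg G i)) eqxx.
  by move: sumB; rewrite g0 mulr0 => sumB _; lra.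
- by move=> gt1; have := chamber_le_wsum_gt1 wA wB le_AB (S := S); lra.
- rewrite subrr add0r => gt0; have [S0 | [i iS]] := set_0Vmem S.
    by move: gt0; rewrite S0 /wsum big_set0 ltxx.
  rewrite /wsum (bigD1 i) //=; have [Bi_gt0 _] := B01 i.
  have : (0 <= \sum_(j in S | j != i) B j)%R.
    by apply: sumr_ge0 => j _; apply: ltW; case: (B01 j).
  lra.
- by move=> _; rewrite -addn3 natrD; have := ler0n rat k; lra.
Qed.

Lemma permwM s t C : permw t (permw s C) = permw (s * t)%g C.
Proof. by apply: functional_extensionality => i; rewrite /permw invMg permM. Qed.

Lemma permw1 C : permw 1%g C = C.
Proof. by apply: functional_extensionality => i; rewrite /permw invg1 perm1. Qed.

Lemma weight_datum_permw s C : weight_datum g C -> weight_datum g (permw s C).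
Proof.
case=> C01 sumC; split=> [i | ]; first exact: C01.
by rewrite (reindex_inj (@perm_inj _ s)); under eq_bigr do rewrite /permw permK.
Qed.

Lemma wsum_permw s C S : wsum (permw s C) S = wsum C (s^-1 @: S)%g.
Proof. by rewrite /wsum big_imset //; apply: in2W; apply: perm_inj. Qed.

Lemma admissible_imset_perm s S : admissible g (s @: S) = admissible g S.
Proof. by rewrite /admissible card_imset //; apply: perm_inj. Qed.

Lemma chamber_le_permw s A B :
  chamber_le g A B -> chamber_le g (permw s A) (permw s B).
Proof.
by move=> le_AB S adm; rewrite !wsum_permw; apply: le_AB; rewrite admissible_imset_perm.
Qed.

Lemma chamber_le_permwV s1 s2 A B : chamber_le g (permw s1 A) (permw s2 B) ->
  chamber_le g A (permw (s2 * s1^-1)%g B).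
Proof. by move/(chamber_le_permw (s := s1^-1%g)); rewrite !permwM mulgV permw1. Qed.

Lemma degA_relabel s G C (v : 'I_(nv G)) :
  degA (G := relabel s G) C v = degA (permw s C) v.
Proof.
rewrite /degA (reindex_inj (@perm_inj _ s^-1%g)).
by apply: eq_big => i; rewrite ?ffunE /permw ?permKV ?invgK.
Qed.

Lemma stable_relabel s G C :
  stable_graph g (permw s C) G -> stable_graph g C (relabel s G).
Proof.
by case=> wfG [genusG stableG]; split=> //; split=> // v; rewrite degA_relabel.
Qed.

Lemma stable_relabel_chamber_le s A B : weight_datum g A -> weight_datum g B ->
  chamber_le g A (permw s B) ->
  forall G, stable_graph g A G -> stable_graph g B (relabel s G).
Proof.
move=> wA wB le_AB G /(stable_chamber_le wA (weight_datum_permw s wB) le_AB).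
exact: stable_relabel.
Qed.

End Chambers.

Theorem mainTheorem5 (g n : nat) (A B : 'I_n -> rat) :
  (1 <= n)%N ->
  in_chamber g A -> in_chamber g B ->
  sym_chamber_le g A B ->
  exists F : functor (stable_graph g A) (stable_graph g B),
    full_inclusion F /\ (sym_chamber_eq g A B -> cat_iso F).
Proof.
move=> _ [wA _] [wB _] [s1 [s2 /chamber_le_permwV le_AB]].
have closedA := stable_morphism_closed g A.
have [[s same_sAB] | not_eq] := classic (sym_chamber_eq g A B); last first.
  exists (relabel_functor (stable_relabel_chamber_le wA wB le_AB)).
  by split=> [|/not_eq //]; exact: relabel_functor_full_inclusion _ closedA.
have le_sAB : chamber_le g (permw s A) (permw 1 B) by rewrite permw1 => S /same_sAB ->.
have le_BsA : chamber_le g B (permw s A) by move=> S /same_sAB ->.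
have {le_AB} := chamber_le_permwV le_sAB; rewrite mul1g => le_AB.
exists (relabel_functor (stable_relabel_chamber_le wA wB le_AB)).
split=> [|_]; first exact: relabel_functor_full_inclusion _ closedA.
apply: (relabel_functor_cat_iso _ closedA) => G; rewrite invgK.
exact: stable_relabel_chamber_le wB wA le_BsA G.
Qed.
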